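(* Let $G$ be a finite abelian group which is either cyclic or a direct product of two cyclic groups. Then every normalized $3$-cocycle on $G$ (with values in $\mathbbm{k}^*$) is abelian.
   Context: $\mathbbm{k}$ is algebraically closed of characteristic zero. For a normalized 3-cocycle $\Phi$ on $G$ and $g\in G$, $\widetilde{\Phi}_g(x,y)=\frac{\Phi(g,x,y)\Phi(x,y,g)}{\Phi(x,g,y)}$. The category ${}^{\mathbbm{k}G}_{\mathbbm{k}G}\mathcal{YD}^{\Phi}$ has objects the $G$-graded vector spaces $V=\bigoplus_gV_g$ with operators $e\triangleright-$ ($e\in G$) preserving each $V_g$, $1\triangleright v=v$, and $e\triangleright(f\triangleright v)=\widetilde{\Phi}_g(e,f)(ef)\triangleright v$ for $v\in V_g$; morphisms are graded maps commuting with the actions. $\Phi$ is called abelian if every simple object of ${}^{\mathbbm{k}G}_{\mathbbm{k}G}\mathcal{YD}^{\Phi}$ is $1$-dimensional. *)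

From HB Require Import structures.
From mathcomp Require Import all_boot all_order all_algebra all_fingroup all_solvable.
Unset Implicit Arguments. Unset Strict Implicit. Unset Printing Implicit Defensive.
Import GRing.Theory.
Local Open Scope ring_scope.

Section YD.
Variables (k : fieldType) (gT : finGroupType).

Definition normalized_3cocycle (Phi : gT -> gT -> gT -> k) : Prop :=
  [/\ (forall e f g, Phi e f g != 0),
      (forall e f g h,
         Phi (e * f)%g g h * Phi e f (g * h)%g
         = Phi e f g * Phi e (f * g)%g h * Phi f g h)
    & (forall e f, [/\ Phi 1%g e f = 1, Phi e 1%g f = 1 & Phi e f 1%g = 1])].

Definition tPhi (Phi : gT -> gT -> gT -> k) (g x y : gT) : k :=
  Phi g x y * Phi x y g / Phi x g y.

(* Objects of the category  kG-YD-kG^Phi : G-graded vector spaces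
   V = (+)_g V_g together with linear operators e |> - preserving each V_g *)
Record yd_obj (Phi : gT -> gT -> gT -> k) := YDObj {
  ydV : gT -> lmodType k;
  ydact : forall g : gT, gT -> ydV g -> ydV g;
  ydact_lin : forall g e (a : k) (u v : ydV g),
      ydact g e (a *: u + v) = a *: ydact g e u + ydact g e v;
  ydact1 : forall g (v : ydV g), ydact g 1%g v = v;
  ydactM : forall g e f (v : ydV g),
      ydact g e (ydact g f v) = tPhi Phi g e f *: ydact g (e * f)%g v
}.
Arguments ydV {Phi}.
Arguments ydact {Phi}.

Definition yd_subobj {Phi} (X : yd_obj Phi) (W : forall g, ydV X g -> Prop) : Prop :=
  forall g,
    [/\ W g 0,
        (forall (a : k) (u v : ydV X g), W g u -> W g v -> W g (a *: u + v))
      & (forall e (v : ydV X g), W g v -> W g (ydact X g e v))].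

Definition yd_nonzero {Phi} (X : yd_obj Phi) : Prop :=
  exists g (v : ydV X g), v != 0.

Definition yd_simple {Phi} (X : yd_obj Phi) : Prop :=
  yd_nonzero X /\
  forall W, yd_subobj X W ->
    (forall g v, W g v -> v = 0) \/ (forall g v, W g v).

Definition yd_one_dim {Phi} (X : yd_obj Phi) : Prop :=
  exists g (v : ydV X g),
    [/\ v != 0,
        (forall h (w : ydV X h), h != g -> w = 0)
      & (forall w : ydV X g, exists a : k, w = a *: v)].

Definition abelian_cocycle (Phi : gT -> gT -> gT -> k) : Prop :=
  forall X : yd_obj Phi, yd_simple X -> yd_one_dim X.

End YD.

Arguments normalized_3cocycle {k gT} Phi.
Arguments tPhi {k gT} Phi g x y.
Arguments abelian_cocycle {k gT} Phi.
Arguments yd_obj {k gT} Phi.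
Arguments yd_simple {k gT Phi} X.
Arguments yd_one_dim {k gT Phi} X.
Arguments yd_subobj {k gT Phi} X W.

(* By the 3-cocycle identity the ratio
   tPhi_g(x,y) / tPhi_g(y,x) is multiplicative in each of g, x, y, and it is 1
   as soon as two of them agree; hence it is identically 1 when G is generated
   by two elements, i.e. all the operators commute.  A simple object is
   concentrated in a single degree g0, where each operator e |> satisfies
   (e |> -)^#[e] = c on V_g0, so it has an eigenvector (k is algebraically
   closed) whose eigenspace is a subobject: every e acts by a scalar, and any
   line of V_g0 is a subobject. *)

From mathcomp Require Import all_boot all_order all_algebra all_fingroup all_solvable.
From mathcomp Require Import ring.
Import GRing.Theory.
Local Open Scope ring_scope.

Section TwoGenerated.
Context {gT : finGroupType}.

Lemma cyclic_gen2 (G : {group gT}) : cyclic G -> exists a b, <<[set a; b]>>%g = G.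
Proof. by case/cyclicP=> a ->; exists a, a; rewrite setUid. Qed.

Lemma dprod_cyclic_gen2 (H K G : {group gT}) :
  cyclic H -> cyclic K -> (H \x K)%g = G -> exists a b, <<[set a; b]>>%g = G.
Proof.
case/cyclicP=> a defH; case/cyclicP=> b defK defG; exists a, b.
apply/eqP; rewrite eqEsubset gen_subG -(dprodW defG) defH defK.
rewrite mul_subG ?cycle_subG ?mem_gen ?inE ?eqxx ?orbT // andbT.
rewrite subUset !sub1set.
by rewrite (subsetP (mulG_subl _ _)) ?(subsetP (mulG_subr _ _)) ?cycle_id.
Qed.

Lemma dprod_cyclic_abelian (H K G : {group gT}) :
  cyclic H -> cyclic K -> (H \x K)%g = G -> abelian G.
Proof.
move=> /cyclic_abelian abH /cyclic_abelian abK /dprodP[_ <- cHK _].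
by rewrite abelianM abH abK.
Qed.

End TwoGenerated.

Lemma gen_morph_eq1 {k : fieldType} {gT : finGroupType} {A : {set gT}} {f : gT -> k} :
  {morph f : x y / (x * y)%g >-> x * y} -> (forall x, f x != 0) ->
  {in A, forall x, f x = 1} -> {in <<A>>%g, forall x, f x = 1}.
Proof.
move=> fM f_neq0 fA x /gen_prodgP[n [c Ac ->]].
have f1 : f 1%g = 1 by apply: (mulfI (f_neq0 1%g)); rewrite -fM mulg1 mulr1.
by rewrite (big_morph f fM f1) big1 // => i _; apply: fA.
Qed.

Lemma cancel_mul_eq {k : fieldType} {Lt Rt A B : k} :
  B != 0 -> A = B -> Lt * B = Rt * A -> Lt = Rt.
Proof. by move=> B_neq0 -> /(mulIf B_neq0). Qed.

Section TwistedCocycle.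
Context {k : fieldType} {gT : finGroupType} (Phi : gT -> gT -> gT -> k).
Hypothesis Phi_cocycle : normalized_3cocycle Phi.
Hypothesis mulgC : forall x y : gT, commute x y.

Let Phi_neq0 e f g : Phi e f g != 0. Proof. by case: Phi_cocycle. Qed.
Let Phi_eq e f g h :
  Phi (e * f)%g g h * Phi e f (g * h)%g = Phi e f g * Phi e (f * g)%g h * Phi f g h.
Proof. by case: Phi_cocycle. Qed.

Local Notation t := (tPhi Phi).

Lemma tPhi_neq0 g x y : t g x y != 0.
Proof. by rewrite /tPhi !(mulf_neq0, invr_eq0, Phi_neq0). Qed.

(* Each identity below is a ratio of instances of the 3-cocycle identity,
   after which [field] checks a rational identity in the values of Phi. *)
Lemma tPhi_cocycle g x y z : t g x y * t g (x * y)%g z = t g y z * t g x (y * z)%g.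
Proof.
have E1 := Phi_eq x y z g; have E2 := Phi_eq x y g z.
have E3 := Phi_eq x g y z; have E4 := Phi_eq g x y z.
rewrite [(z * g)%g]mulgC in E1; rewrite [(y * g)%g]mulgC in E2.
rewrite [(x * g)%g]mulgC in E3 E4.
have E := congr2 *%R (congr2 *%R (congr2 *%R E1 (esym E2)) E3) (esym E4).
apply: (cancel_mul_eq _ E); first by rewrite !mulf_neq0 ?Phi_neq0.
by rewrite /tPhi; field; rewrite ?Phi_neq0.
Qed.

Lemma tPhi_mulg g h x y :
  t g x y * t h x y * t x g h * t y g h = t (g * h)%g x y * t (x * y)%g g h.
Proof.
have E1 := Phi_eq g h x y; have E2 := Phi_eq x y g h; have E3 := Phi_eq x g y h.
have E4 := Phi_eq g x y h; have E5 := Phi_eq x g h y; have E6 := Phi_eq g x h y.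
rewrite [(y * g)%g]mulgC [(x * g)%g]mulgC [(y * h)%g]mulgC [(x * h)%g]mulgC
  in E1 E2 E3 E4 E5 E6.
have E := congr2 *%R (congr2 *%R (congr2 *%R (congr2 *%R (congr2 *%R
  (esym E1) (esym E2)) E3) (esym E4)) (esym E5)) E6.
apply: (cancel_mul_eq _ E); first by rewrite !mulf_neq0 ?Phi_neq0.
by rewrite /tPhi; field; rewrite ?Phi_neq0.
Qed.

Definition tPhi_comm g x y := t g x y / t g y x.

Lemma tPhi_comm_neq0 g x y : tPhi_comm g x y != 0.
Proof. by rewrite /tPhi_comm mulf_neq0 ?invr_eq0 ?tPhi_neq0. Qed.

Lemma tPhi_commMl g x y z : tPhi_comm g (x * y)%g z = tPhi_comm g x z * tPhi_comm g y z.
Proof.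
have E1 := tPhi_cocycle g x y z; have E2 := tPhi_cocycle g z x y.
have E3 := tPhi_cocycle g x z y.
rewrite [(z * x)%g]mulgC [(z * y)%g]mulgC in E1 E2 E3.
have E := congr2 *%R (congr2 *%R E1 E2) (esym E3).
apply: (cancel_mul_eq _ E); first by rewrite ?(tPhi_neq0, mulf_neq0).
by rewrite /tPhi_comm; field; rewrite ?tPhi_neq0.
Qed.

Lemma tPhi_commMr g x y z : tPhi_comm g x (y * z)%g = tPhi_comm g x y * tPhi_comm g x z.
Proof.
have inv u v : tPhi_comm g u v = (tPhi_comm g v u)^-1 by rewrite /tPhi_comm invf_div.
by rewrite inv tPhi_commMl invfM -!inv.
Qed.

Lemma tPhi_commMg g h x y : tPhi_comm (g * h)%g x y = tPhi_comm g x y * tPhi_comm h x y.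
Proof.
have E1 := tPhi_mulg g h x y; have E2 := tPhi_mulg g h y x.
rewrite [(y * x)%g]mulgC in E2.
have E := congr2 *%R (esym E1) E2.
apply: (cancel_mul_eq _ E); first by rewrite ?(tPhi_neq0, mulf_neq0).
by rewrite /tPhi_comm; field; rewrite ?tPhi_neq0.
Qed.

Lemma tPhi_comm_eq1 g x y : [|| g == x, g == y | x == y] -> tPhi_comm g x y = 1.
Proof.
have tPhi_g u v : t u u v = t u v u by rewrite /tPhi; field; rewrite !Phi_neq0.
by case/or3P=> /eqP <-; rewrite /tPhi_comm ?tPhi_g divff ?tPhi_neq0.
Qed.

(* Among any three of the generators two agree, and [tPhi_comm] is
   multiplicative in each argument. *)
Lemma tPhi_sym_gen2 a b : <<[set a; b]>>%g = [set: gT] ->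
  forall g x y, t g x y = t g y x.
Proof.
move=> genG g x y; apply: divr1_eq; rewrite -/(tPhi_comm g x y).
have gen_eq1 (f : gT -> k) : {morph f : u v / (u * v)%g >-> u * v} ->
    (forall u, f u != 0) -> f a = 1 -> f b = 1 -> forall u, f u = 1.
  move=> fM f_neq0 fa fb u.
  apply: (gen_morph_eq1 (A := [set a; b]) fM f_neq0); last by rewrite genG inE.
  by move=> v; rewrite !inE => /orP[]/eqP->.
move: y; apply: (gen_eq1) => [u v|u||] /=; rewrite ?tPhi_commMr ?tPhi_comm_neq0 //.
all: move: x; apply: (gen_eq1) => [u v|u||] /=; rewrite ?tPhi_commMl ?tPhi_comm_neq0 //.
all: move: g; apply: (gen_eq1) => [u v|u||] /=; rewrite ?tPhi_commMg ?tPhi_comm_neq0 //.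
all: by apply: tPhi_comm_eq1; rewrite !eqxx ?orbT.
Qed.

End TwistedCocycle.

Section PolyAct.
Context {k : fieldType} {V : lmodType k} (T : V -> V).
Hypothesis T_lin : forall a u v, T (a *: u + v) = a *: T u + T v.

Lemma lin_op0 : T 0 = 0.
Proof.
have := T_lin 1 0 0; rewrite scaler0 addr0 scale1r -{1}[T 0]addr0.
by move/addrI.
Qed.

Lemma lin_iter i a u v : iter i T (a *: u + v) = a *: iter i T u + iter i T v.
Proof. by elim: i => //= i ->; rewrite T_lin. Qed.

Definition poly_act (p : {poly k}) (v : V) := \sum_(i < size p) p`_i *: iter i T v.

Lemma poly_act_widen (p : {poly k}) n v : (size p <= n)%N ->
  poly_act p v = \sum_(i < n) p`_i *: iter i T v.
Proof.
move=> le_p_n; rewrite /poly_act (big_ord_widen n (fun i => p`_i *: iter i T v)) //.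
rewrite big_mkcond; apply: eq_bigr => i _; case: ltnP => // le_p_i.
by rewrite nth_default ?scale0r.
Qed.

Lemma poly_actD (p q : {poly k}) v : poly_act (p + q) v = poly_act p v + poly_act q v.
Proof.
pose n := maxn (size p) (size q).
rewrite !(poly_act_widen _ n) ?leq_maxl ?leq_maxr ?(leq_trans (size_polyD _ _)) //.
by rewrite -big_split; apply: eq_bigr => i _; rewrite coefD scalerDl.
Qed.

Lemma poly_actZ c (p : {poly k}) v : poly_act (c *: p) v = c *: poly_act p v.
Proof.
rewrite !(poly_act_widen _ (size p)) ?size_scale_leq // scaler_sumr.
by apply: eq_bigr => i _; rewrite coefZ scalerA.
Qed.

Lemma poly_actMX (p : {poly k}) v : poly_act (p * 'X) v = poly_act p (T v).
Proof.
rewrite (poly_act_widen _ (size p).+1); last first.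
  by rewrite (leq_trans (size_polyMleq _ _)) // size_polyX addn2.
rewrite big_ord_recl coefMX /= scale0r add0r.
by apply: eq_bigr => i _; rewrite coefMX /= add0n -iterSr.
Qed.

Lemma poly_act_lin (p : {poly k}) a u v :
  poly_act p (a *: u + v) = a *: poly_act p u + poly_act p v.
Proof.
rewrite /poly_act scaler_sumr -big_split; apply: eq_bigr => i _.
by rewrite lin_iter scalerDr !scalerA mulrC.
Qed.

Lemma poly_act_mulXsubC (p : {poly k}) r v :
  poly_act (p * ('X - r%:P)) v = poly_act p (T v - r *: v).
Proof.
rewrite mulrBr -scaleN1r poly_actD poly_actMX mulrC mul_polyC -scaleN1r !poly_actZ.
by rewrite !scalerA [in RHS]addrC poly_act_lin addrC.
Qed.

Lemma poly_actC c v : poly_act c%:P v = c *: v.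
Proof. by rewrite (poly_act_widen _ 1) ?size_polyC_leq1 // big_ord1 coefC. Qed.

Lemma poly_actXn n v : poly_act 'X^n v = iter n T v.
Proof.
rewrite (poly_act_widen _ n.+1) ?size_polyXn // big_ord_recr /= big1 ?add0r.
  by rewrite coefXn eqxx scale1r.
by move=> i _; rewrite coefXn (ltn_eqF (ltn_ord i)) scale0r.
Qed.

End PolyAct.

Lemma poly_act_eigenvector {k : closedFieldType} {V : lmodType k} (T : V -> V)
    (p : {poly k}) (v : V) :
    (forall a u w, T (a *: u + w) = a *: T u + T w) ->
  p != 0 -> v != 0 -> poly_act T p v = 0 -> exists r (w : V), w != 0 /\ T w = r *: w.
Proof.
move=> T_lin; move: {2}(size p) (leqnn (size p)) => n.
elim: n p v => [|n IHn] p v le_p_n p_neq0 v_neq0.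
  by move: p_neq0; rewrite -size_poly_eq0 -leqn0 le_p_n.
have [/eqP/size_poly1P[c c_neq0 ->]|p_nconst] := eqVneq (size p) 1.
  by rewrite poly_actC => /eqP; rewrite scaler_eq0 (negbTE c_neq0) (negbTE v_neq0).
have [r /factor_theorem[q def_p]] := closed_rootP p p_nconst.
have [/eqP|Tv_neq0] := eqVneq (T v - r *: v) 0.
  by rewrite subr_eq0 => /eqP Tv; exists r, v.
have q_neq0 : q != 0 by apply: contraNneq p_neq0 => q0; rewrite def_p q0 mul0r.
rewrite def_p (poly_act_mulXsubC _ T_lin); apply: IHn => //.
by move: le_p_n; rewrite def_p size_mul ?polyXsubC_eq0 // size_XsubC addn2.
Qed.

Section SimpleObject.
Context {k : closedFieldType} {gT : finGroupType} {Phi : gT -> gT -> gT -> k}.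
Variable X : yd_obj Phi.
Hypothesis X_simple : yd_simple X.

Local Notation V := (ydV _ _ _ X).
Local Notation act := (ydact _ _ _ X).

Let X_irr {W} : yd_subobj X W -> (forall g v, W g v -> v = 0) \/ (forall g v, W g v).
Proof. by case: X_simple => _; apply. Qed.

Lemma ydact0 g e : act g e 0 = 0.
Proof. exact/lin_op0/(ydact_lin _ _ _ X). Qed.

Lemma ydactZ g e c (v : V g) : act g e (c *: v) = c *: act g e v.
Proof. by rewrite -[c *: v]addr0 ydact_lin ydact0 addr0. Qed.

Lemma iter_ydact g e n :
  exists c, forall v : V g, iter n (act g e) v = c *: act g (e ^+ n)%g v.
Proof.
elim: n => [|n [c IHn]]; first by exists 1 => v; rewrite expg0 ydact1 scale1r.
exists (c * tPhi Phi g e (e ^+ n)%g) => v.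
by rewrite iterS IHn ydactZ ydactM scalerA expgS.
Qed.

Lemma ydact_eigenvector g e {v : V g} :
  v != 0 -> exists r (w : V g), w != 0 /\ act g e w = r *: w.
Proof.
move=> v_neq0; have [c iter_e] := iter_ydact g e #[e]%g.
apply: (poly_act_eigenvector _ ('X^#[e]%g - c%:P) _ (ydact_lin _ _ _ X g e) _ v_neq0).
  by rewrite -size_poly_eq0 size_XnsubC ?order_gt0.
by rewrite poly_actD -scaleN1r poly_actZ poly_actXn poly_actC iter_e expg_order ydact1
  scaleN1r subrr.
Qed.

Lemma yd_simple_support {g0} {v0 : V g0} :
  v0 != 0 -> forall h (w : V h), h != g0 -> w = 0.
Proof.
move=> v0_neq0; have W_sub : yd_subobj X (fun g v => g = g0 \/ v = 0).
  move=> g; split=> [|a u v|e v]; first by right.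
  - by case=> [|->]; [left | case=> [|->]; [left | right; rewrite scaler0 addr0]].
  - by case=> [|->]; [left | right; rewrite ydact0].
case: (X_irr W_sub) => [W0 | WT] h w h_neq.
  by move/eqP: v0_neq0; case; apply: W0 (or_introl erefl).
by case: (WT h w) => // def_h; rewrite def_h eqxx in h_neq.
Qed.

Hypothesis ydact_comm :
  forall g e f (v : V g), act g e (act g f v) = act g f (act g e v).

Lemma ydact_scalar {g0} {v0 : V g0} : v0 != 0 ->
  forall e, exists r, forall g (v : V g), act g e v = r *: v.
Proof.
move=> v0_neq0 e; have [r [w [w_neq0 ew]]] := ydact_eigenvector g0 e v0_neq0.
exists r; have W_sub : yd_subobj X (fun g v => act g e v = r *: v).
  move=> g; split=> [|a u v eu ev|f v ev]; first by rewrite ydact0 scaler0.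
  - by rewrite ydact_lin eu ev scalerDr !scalerA mulrC.
  - by rewrite ydact_comm ev ydactZ.
by case: (X_irr W_sub) => [/(_ g0 w ew)/eqP|//]; rewrite (negbTE w_neq0).
Qed.

Lemma yd_simple_one_dim : yd_one_dim X.
Proof.
case: X_simple => [[g0 [v0 v0_neq0]] _].
(* The line [k v0] in degree [g0]; the condition is vacuous in other degrees. *)
pose line g (v : V g) := forall E : g0 = g, exists c, v = c *: ecast h (V h) E v0.
have line_sub : yd_subobj X line.
  move=> g; split=> [E|a u v u_line v_line E|e v v_line E].
  - by exists 0; rewrite scale0r.
  - have [cu ->] := u_line E; have [cv ->] := v_line E.
    by exists (a * cu + cv); rewrite scalerDl scalerA.
  - have [c ->] := v_line E; have [r act_e] := ydact_scalar v0_neq0 e.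
    by exists (c * r); rewrite ydactZ act_e scalerA.
case: (X_irr line_sub) => [line0 | line_all].
  by move/eqP: v0_neq0; case; apply: line0 => E; exists 1; rewrite (eq_axiomK E) scale1r.
exists g0, v0; split=> // [|w]; first exact: yd_simple_support v0_neq0.
by have [c ->] := line_all g0 w erefl; exists c.
Qed.

End SimpleObject.

Lemma abelian_cocycle_tPhi_sym (k : closedFieldType) (gT : finGroupType)
    (Phi : gT -> gT -> gT -> k) :
    (forall x y : gT, commute x y) -> (forall g x y, tPhi Phi g x y = tPhi Phi g y x) ->
  abelian_cocycle Phi.
Proof.
move=> mulgC tPhi_sym X X_simple; apply: yd_simple_one_dim => // g e f v.
by rewrite !ydactM tPhi_sym mulgC.
Qed.

Theorem proposition3p15 (k : closedFieldType) (gT : finGroupType)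
  (hchar : [pchar k] =i pred0)
  (hG : cyclic [set: gT] \/
        exists H K : {group gT}, [/\ cyclic H, cyclic K & (H \x K)%g = [set: gT]])
  (Phi : gT -> gT -> gT -> k)
  (hPhi : normalized_3cocycle Phi) :
  abelian_cocycle Phi.
Proof.
have [abG [a [b genG]]] : abelian [set: gT] /\ exists a b, <<[set a; b]>>%g = [set: gT].
  case: hG => [cycG | [H [K [cycH cycK defG]]]].
    by split; [exact: cyclic_abelian | exact: cyclic_gen2].
  by split; [exact: dprod_cyclic_abelian defG | exact: dprod_cyclic_gen2 defG].
have mulgC (x y : gT) : commute x y by apply: (centsP abG); rewrite inE.
by apply: abelian_cocycle_tPhi_sym => //; apply: tPhi_sym_gen2 hPhi mulgC _ _ genG.
Qed.
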